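(* Let $k\ge1$ and $0\le r<k$ be integers. Then for every $n\ge1$, $$\sum_{j=0}^n(-1)^j\begin{bmatrix} r+1\\ j\end{bmatrix}_q q^{nkj+\binom{j}{2}-k\binom{j+1}{2}}F^{(k)}_{k(n-j)+r}(x;q)=x^{r+1}F^{(k)}_{kn-1}(x;q),$$ and for every $n\ge1$ and every integer $i$ with $0<i<k+n$, $$\sum_{j=0}^{n-1}(-1)^{n-1-j}\begin{bmatrix} i-k+r\\ n-1-j\end{bmatrix}_q x^k q^{\binom{n-j-1}{2}-k\binom{n-j}{2}+(n-j-1)(kn-i+1)}F^{(k)}_{kj+r}(x;q)=x^{r+i}F^{(k)}_{kn-i}(x;q).$$
   Context: Here $q$ is an indeterminate and all quantities lie in $\mathbb{Q}(q)[x]$. The $q$-binomial coefficient is defined for integers $m$ (possibly negative) and $j$ by $\begin{bmatrix} m\\ j\end{bmatrix}_q=\prod_{t=0}^{j-1}\frac{1-q^{m-t}}{1-q^{t+1}}$ if $j\ge0$ and $0$ if $j<0$. For an integer $k\ge1$, the $q$-Fibonacci polynomials $F^{(k)}_n(x;q)$ ($n\ge0$) are defined by $F^{(k)}_n(x;q)=x^n$ for $0\le n<k$ and $F^{(k)}_{n+k}(x;q)=xF^{(k)}_{n+k-1}(x;q)+q^nF^{(k)}_n(x;q)$ for $n\ge0$. *)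

From HB Require Import structures.
From mathcomp Require Import all_boot all_order all_algebra.
From mathcomp Require Import fraction.
Set Implicit Arguments. Unset Strict Implicit. Unset Printing Implicit Defensive.
Import Order.TTheory GRing.Theory Num.Theory.
Local Open Scope ring_scope.

Definition Qq : fieldType := {fraction {poly rat}}.
Definition qq : Qq := tofrac ('X : {poly rat}).

(* q-binomial [m choose j]_q for integer m and natural j (the case j < 0,
   where it is 0, never occurs in the statement). *)
Definition qbinom (m : int) (j : nat) : Qq :=
  \prod_(t < j) ((1 - qq ^ (m - t%:Z)) / (1 - qq ^ (t.+1)%:Z)).

Fixpoint qfib_aux (k : nat) (fuel n : nat) : {poly Qq} :=
  match fuel with
  | 0%N => 0
  | fuel'.+1 =>
      if (n < k)%N then 'X^n
      else 'X * qfib_aux k fuel' n.-1 + (qq ^+ (n - k))%:P * qfib_aux k fuel' (n - k)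
  end.

Definition qfib (k n : nat) : {poly Qq} := qfib_aux k n.+1 n.

(* Both sides of the second identity, viewed as functions of n and i, satisfy
   the recurrence T(n+1, i) = T(n+1, i+1) + q^(kn-i) T(n, i): for the sums this
   is q-Pascal's rule in the upper index of the q-binomial, for the right-hand
   sides it is the defining recurrence of F^(k). Hence, by induction on n, the
   difference of the two sides is constant in i over the whole range
   0 < i < k + n, and it vanishes at i = k - r, where the q-binomial [0, m]_q
   kills every term but the last. The first identity is the case i = k + 1 of
   the second, divided by x^k and summed in reverse order. *)
From HB Require Import structures.
From mathcomp Require Import all_boot all_order all_algebra.
From mathcomp Require Import fraction.
From mathcomp Require Import zify ring.
Import Order.TTheory GRing.Theory Num.Theory.
Local Open Scope ring_scope.

Lemma eq_on_interval (T : Type) (f : nat -> T) (lo hi : nat) :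
  (forall i, (lo <= i < hi)%N -> f i.+1 = f i) ->
  forall i, (lo <= i <= hi)%N -> f i = f lo.
Proof.
move=> step; elim=> [|i IH] hi_range; first by congr f; lia.
have [le_lo_i | lt_i_lo] := leqP lo i; last by congr f; lia.
by rewrite step ?IH //; lia.
Qed.

Lemma qq_neq0 : qq != 0.
Proof. by rewrite /qq tofrac_eq0 polyX_eq0. Qed.

Lemma expqq_neq1 (n : nat) : qq ^ (n.+1)%:Z != 1.
Proof.
rewrite -exprnP /qq -rmorphXn -(rmorph1 (@tofrac _)) tofrac_eq.
apply/negP => /eqP /(congr1 (fun p : {poly rat} => size p)).
by rewrite size_polyXn size_poly1.
Qed.

Lemma qfib_aux_fuel (k f g n : nat) : (0 < k)%N -> (n < f)%N -> (n < g)%N ->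
  qfib_aux k f n = qfib_aux k g n.
Proof.
move=> k_gt0; elim: f g n => [|f IH] [|g] n //= hf hg.
case: ifP => // /negbT hnk.
rewrite (IH g n.-1); [rewrite (IH g (n - k)%N) // | | ]; lia.
Qed.

Lemma qfib_small (k n : nat) : (n < k)%N -> qfib k n = 'X^n.
Proof. by move=> h; rewrite /qfib /= h. Qed.

Lemma qfib_rec (k n : nat) : (0 < k)%N -> (k <= n)%N ->
  qfib k n = 'X * qfib k n.-1 + (qq ^+ (n - k))%:P * qfib k (n - k).
Proof.
move=> k_gt0 h; rewrite /qfib /= ltnNge h /=.
by rewrite (@qfib_aux_fuel k n n.-1.+1) ?(@qfib_aux_fuel k n (n - k).+1) //; lia.
Qed.

Lemma qbinom0 (m : int) : qbinom m 0 = 1.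
Proof. by rewrite /qbinom big_ord0. Qed.

Lemma qbinomS (m : int) (l : nat) :
  qbinom m l.+1 = qbinom m l * ((1 - qq ^ (m - l%:Z)) / (1 - qq ^ (l.+1)%:Z)).
Proof. by rewrite /qbinom big_ord_recr. Qed.

Lemma qbinom_0S (l : nat) : qbinom 0 l.+1 = 0.
Proof. by rewrite /qbinom big_ord_recl /= subr0 expr0z subrr !mul0r. Qed.

Lemma qbinomD1_mul (m : int) (l : nat) :
  qbinom (m + 1) l * (1 - qq ^ (m + 1 - l%:Z)) = qbinom m l * (1 - qq ^ (m + 1)).
Proof.
elim: l => [|l IH]; first by rewrite !qbinom0 subr0.
have -> : m + 1 - l.+1%:Z = m - l%:Z by rewrite -addn1 PoszD; ring.
rewrite !qbinomS; move: IH.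
move: (qbinom (m + 1) l) (qbinom m l) (qq ^ (m + 1 - l%:Z)) (qq ^ (m - l%:Z))
  (qq ^ (l.+1)%:Z) => A B C D E IH.
transitivity ((A * (1 - C)) * ((1 - D) / (1 - E))); first by ring.
by rewrite IH; ring.
Qed.

Lemma qbinom_pascal (m : int) (l : nat) :
  qbinom (m + 1) l.+1 = qq ^ (l.+1)%:Z * qbinom m l.+1 + qbinom m l.
Proof.
have qm1 : qq ^ (m + 1) = qq ^ (l.+1)%:Z * qq ^ (m - l%:Z).
  by rewrite -expfzDr ?qq_neq0 //; congr (_ ^ _); rewrite -addn1 PoszD; ring.
have den_neq0 : 1 - qq ^ (l.+1)%:Z != 0 by rewrite subr_eq0 eq_sym expqq_neq1.
have ratio := qbinomD1_mul m l.
rewrite !qbinomS; move: ratio den_neq0 qm1.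
move: (qbinom (m + 1) l) (qbinom m l) (qq ^ (m + 1 - l%:Z)) (qq ^ (m - l%:Z))
  (qq ^ (l.+1)%:Z) (qq ^ (m + 1)) => A B C D E G ratio den_neq0 qm1.
transitivity ((A * (1 - C)) / (1 - E)); first by ring.
rewrite ratio qm1.
transitivity ((E * (B * (1 - D)) + B * (1 - E)) / (1 - E)); first by congr (_ / _); ring.
by rewrite mulrDl mulfK //; ring.
Qed.

Section SecondIdentity.

Variables k r : nat.

Definition qfib_coef (n i j : nat) : Qq :=
  (-1) ^+ (n - 1 - j) * qbinom (i%:Z - k%:Z + r%:Z) (n - 1 - j)
  * qq ^ (('C(n - j - 1, 2))%:Z - (k * 'C(n - j, 2))%:Z
          + ((n - j - 1) * (k * n - i + 1))%:Z).
Arguments qfib_coef : simpl never.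

Definition qfib_sum (n i : nat) : {poly Qq} :=
  \sum_(j < n) (qfib_coef n i j)%:P * 'X^k * qfib k (k * j + r).

Definition qfib_shift (n i : nat) : {poly Qq} := 'X^(r + i) * qfib k (k * n - i).

Lemma qfib_coef_last (n i : nat) : qfib_coef n.+1 i n = 1.
Proof.
rewrite /qfib_coef !(subnn, subSnn, subn1, bin_small) //= muln0 mul0n.
by rewrite expr0 qbinom0 !mul1r; apply: expr0z.
Qed.

Lemma qfib_coef_rec (n i j : nat) : (0 < k)%N -> (j < n)%N -> (i <= k * n)%N ->
  qfib_coef n.+1 i j = qfib_coef n.+1 i.+1 j + qq ^+ (k * n - i) * qfib_coef n i j.
Proof.
move=> k_gt0 lt_jn le_ikn; rewrite /qfib_coef.
set l := (n - j - 1)%N; set s := (k * n - i)%N.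
have -> : (n.+1 - 1 - j = l.+1)%N by lia.
have -> : (n.+1 - j - 1 = l.+1)%N by lia.
have -> : (n.+1 - j = l.+2)%N by lia.
have -> : (n - 1 - j = l)%N by lia.
have -> : (n - j = l.+1)%N by lia.
have -> : (k * n.+1 - i + 1 = s + k + 1)%N by lia.
have -> : (k * n.+1 - i.+1 + 1 = s + k)%N by lia.
have -> : (i.+1)%:Z - k%:Z + r%:Z = (i%:Z - k%:Z + r%:Z) + 1.
  by rewrite -addn1 PoszD; ring.
rewrite qbinom_pascal.
have binS2 m : 'C(m.+1, 2) = ('C(m, 2) + m)%N by rewrite binS bin1.
have e1 : qq ^ (('C(l.+1, 2))%:Z - (k * 'C(l.+2, 2))%:Z + (l.+1 * (s + k + 1))%:Z)
  = qq ^ (l.+1)%:Z * qq ^ (('C(l.+1, 2))%:Z - (k * 'C(l.+2, 2))%:Z + (l.+1 * (s + k))%:Z).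
  by rewrite -expfzDr ?qq_neq0 //; congr (_ ^ _); lia.
have e2 : qq ^+ s * qq ^ (('C(l, 2))%:Z - (k * 'C(l.+1, 2))%:Z + (l * (s + 1))%:Z)
  = qq ^ (('C(l.+1, 2))%:Z - (k * 'C(l.+2, 2))%:Z + (l.+1 * (s + k))%:Z).
  by rewrite exprnP -expfzDr ?qq_neq0 //; congr (_ ^ _); rewrite !binS2; lia.
rewrite e1 -e2 exprS.
move: (qq ^+ s) (qq ^ (l.+1)%:Z)
  (qq ^ (('C(l, 2))%:Z - (k * 'C(l.+1, 2))%:Z + (l * (s + 1))%:Z))
  (qbinom (i%:Z - k%:Z + r%:Z) l.+1) (qbinom (i%:Z - k%:Z + r%:Z) l)
  ((-1 : Qq) ^+ l) => A B C D E F.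
by ring.
Qed.

Lemma qfib_coef_eq0 (n j : nat) : (r <= k)%N -> (j < n)%N ->
  qfib_coef n.+1 (k - r) j = 0.
Proof.
move=> le_rk lt_jn; rewrite /qfib_coef.
have -> : (k - r)%N%:Z - k%:Z + r%:Z = 0 by lia.
have -> : (n.+1 - 1 - j = (n - 1 - j).+1)%N by lia.
by rewrite qbinom_0S mulr0 mul0r.
Qed.

Lemma qfib_sum_rec (n i : nat) : (0 < k)%N -> (i <= k * n)%N ->
  qfib_sum n.+1 i = qfib_sum n.+1 i.+1 + (qq ^+ (k * n - i))%:P * qfib_sum n i.
Proof.
move=> k_gt0 le_ikn.
(* Matching a generic ring lemma against [qfib] can unfold the fuel-driven
   recursion, so the summands are named or generalized before rewriting. *)
have -> c : c%:P * qfib_sum n i =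
    \sum_(j < n) c%:P * ((qfib_coef n i j)%:P * 'X^k * qfib k (k * j + r)).
  exact: mulr_sumr.
rewrite /qfib_sum [LHS]big_ord_recr [in RHS]big_ord_recr.
rewrite !qfib_coef_last addrAC -big_split; congr (_ + _); apply: eq_bigr => j _.
rewrite /= qfib_coef_rec //.
move: (qfib_coef n.+1 i.+1 j) (qq ^+ (k * n - i)) (qfib_coef n i j)
  (qfib k (k * j + r)) => a b c F.
rewrite polyCD polyCM; move: a%:P b%:P c%:P ('X^k : {poly Qq}) => A B C X.
by ring.
Qed.

Lemma qfib_shift_rec (n i : nat) : (0 < k)%N -> (i <= k * n)%N ->
  qfib_shift n.+1 i = qfib_shift n.+1 i.+1 + (qq ^+ (k * n - i))%:P * qfib_shift n i.
Proof.
move=> k_gt0 le_ikn; rewrite /qfib_shift (@qfib_rec k (k * n.+1 - i)) //; last by lia.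
have -> : ((k * n.+1 - i).-1 = k * n.+1 - i.+1)%N by lia.
have -> : (k * n.+1 - i - k = k * n - i)%N by lia.
rewrite addnS exprS.
move: ('X : {poly Qq}) ('X^(r + i) : {poly Qq}) (qfib _ _) (qfib _ _)
  (qq ^+ _)%:P => A B C D E.
by rewrite mulrDr !mulrA (mulrC A) (mulrC E).
Qed.

Lemma qfib_sum_shift_kr (n : nat) : (r <= k)%N ->
  qfib_sum n.+1 (k - r) = qfib_shift n.+1 (k - r).
Proof.
move=> le_rk; rewrite /qfib_sum /qfib_shift big_ord_recr big1 => [|j _]; last first.
  by rewrite (@qfib_coef_eq0 n j le_rk (ltn_ord j)) polyC0 !mul0r.
rewrite qfib_coef_last polyC1 mul1r (subnKC le_rk).
apply: etrans (add0r _) _.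
by congr (_ * qfib k _); rewrite /=; lia.
Qed.

Lemma qfib_sum_shift (n i : nat) : (0 < k)%N -> (r < k)%N ->
  (0 < i)%N -> (i < k + n.+1)%N -> qfib_sum n.+1 i = qfib_shift n.+1 i.
Proof.
move=> k_gt0 r_lt_k; elim: n i => [|n IH] i i_gt0 lt_i.
  rewrite /qfib_sum /qfib_shift big_ord1 qfib_coef_last /= muln0 add0n.
  rewrite !qfib_small //; last by lia.
  by rewrite polyC1 mul1r -!exprD; congr (_ ^+ _); lia.
pose D m := qfib_sum n.+2 m - qfib_shift n.+2 m.
have D_const m : (1 <= m <= k + n.+1)%N -> D m = D 1%N.
  apply: eq_on_interval => {}m m_range.
  have le_m : (m <= k * n.+1)%N by nia.
  rewrite /D (qfib_sum_rec _ _ k_gt0 le_m) (qfib_shift_rec _ _ k_gt0 le_m) IH; try lia.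
  by rewrite opprD addrACA subrr addr0.
have D_kr : D (k - r)%N = 0 by rewrite /D qfib_sum_shift_kr ?subrr // ltnW.
apply/eqP; rewrite -subr_eq0 -/(D i) D_const; last by lia.
by rewrite -(D_const (k - r)%N) ?D_kr //; lia.
Qed.

Lemma qfib_coef_first (n j : nat) : (0 < k)%N -> (j <= n)%N ->
  qfib_coef n.+1 k.+1 (n - j) = (-1) ^+ j * qbinom (r.+1)%:Z j
    * qq ^ ((n * k * j)%:Z + ('C(j, 2))%:Z - (k * 'C(j.+1, 2))%:Z).
Proof.
move=> k_gt0 le_jn; rewrite /qfib_coef.
have -> : (n.+1 - 1 - (n - j) = j)%N by lia.
have -> : (n.+1 - (n - j) - 1 = j)%N by lia.
have -> : (n.+1 - (n - j) = j.+1)%N by lia.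
have -> : (k.+1)%:Z - k%:Z + r%:Z = (r.+1)%:Z.
  by rewrite -[k.+1]addn1 -[r.+1]addn1 !PoszD; ring.
have -> : (j * (k * n.+1 - k.+1 + 1) = n * k * j)%N.
  case: n le_jn => [|m] le_jn; first by rewrite (_ : j = 0%N) ?mul0n ?muln0 //; lia.
  have -> : (k * m.+2 - k.+1 + 1 = k * m.+1)%N by nia.
  by nia.
by congr (_ * _ ^ _); lia.
Qed.

End SecondIdentity.

Theorem lemma11 (k r : nat) (hk : (1 <= k)%N) (hr : (r < k)%N) :
  (forall n : nat, (1 <= n)%N ->
     \sum_(j < n.+1)
        ((-1) ^+ j * qbinom (r.+1)%:Z j
         * qq ^ ((n * k * j)%:Z + ('C(j, 2))%:Z - (k * 'C(j.+1, 2))%:Z))%:P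
        * qfib k (k * (n - j) + r)
     = 'X^(r.+1) * qfib k (k * n - 1))
  /\
  (forall n i : nat, (1 <= n)%N -> (0 < i)%N -> (i < k + n)%N ->
     \sum_(j < n)
        ((-1) ^+ (n - 1 - j) * qbinom (i%:Z - k%:Z + r%:Z) (n - 1 - j)
         * qq ^ (('C(n - j - 1, 2))%:Z - (k * 'C(n - j, 2))%:Z
                 + ((n - j - 1) * (k * n - i + 1))%:Z))%:P
        * 'X^k * qfib k (k * j + r)
     = 'X^(r + i) * qfib k (k * n - i)).
Proof.
split=> [n n_ge1 | [//|n] i _ i_gt0 lt_i]; last exact: qfib_sum_shift.
have Xk_neq0 : ('X^k : {poly Qq}) != 0 by rewrite expf_neq0 // polyX_eq0.
apply: (mulfI Xk_neq0); rewrite mulrA -exprD.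
have -> : (k * n - 1 = k * n.+1 - k.+1)%N by nia.
have -> : (k + r.+1 = r + k.+1)%N by lia.
rewrite -/(qfib_shift k r n.+1 k.+1) -qfib_sum_shift //; last by lia.
rewrite mulr_sumr /qfib_sum [RHS](reindex_inj rev_ord_inj); apply: eq_bigr => j _.
rewrite qfib_coef_first //=; last by have := ltn_ord j; lia.
by rewrite mulrCA mulrA; congr (_ * qfib k _); lia.
Qed.
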